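(* Let $h(w)=\sum_{s\in\mathcal S}\pi_s\,\frac{\phi_s^\top w-V_s}{\|\phi_s\|_2^2}\,\phi_s$ be the function tracked asymptotically by the Normalized Monte Carlo update $w_{k+1}=w_k-\alpha_k TP_k(w_k)$. Then the unique globally asymptotically stable equilibrium of the limiting ODE $\dot w(t)=-h(w(t))$ is $w^M=\big[(\Phi^\top NDN\Phi)^{-1}\Phi^\top NDN\big]V$.
   Context: $\mathcal S=\{1,\dots,m\}$ is the state space of an ergodic Markov chain with stationary distribution $\pi$, $D=\mathrm{diag}(\pi)$; $V\in\mathbb R^m$ is the value function; $\phi_s\in\mathbb R^n$ are nonzero features and $\Phi\in\mathbb R^{m\times n}$ (rows $\phi_s^\top$) has full column rank; $N$ is diagonal with $N_{(s,s)}=1/\|\phi_s\|_2$. $TP_k$ is the sampled normalized update $\frac1\tau\sum_{i=1}^\tau\frac{\phi_i^\top w-\widetilde V_i}{\|\phi_i\|^2}\phi_i$ over the distinct states of a sampled trajectory, whose conditional expectation is $h$. *)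

From HB Require Import structures.
From mathcomp Require Import all_boot all_order all_algebra.
From mathcomp Require Import all_classical all_reals all_analysis.
Set Implicit Arguments. Unset Strict Implicit. Unset Printing Implicit Defensive.
Import Order.TTheory GRing.Theory Num.Theory.
Import numFieldNormedType.Exports.
Local Open Scope ring_scope.
Local Open Scope classical_set_scope.

Definition stochastic (R : realType) (m : nat) (P : 'M[R]_m) : Prop :=
  (forall s t, 0 <= P s t) /\ (forall s, \sum_t P s t = 1).

(* Ergodic finite chain: irreducible and aperiodic, i.e. primitive. *)
Definition ergodic (R : realType) (m : nat) (P : 'M[R]_m) : Prop :=
  exists k : nat, forall s t, 0 < (P ^+ k) s t.

Definition stationary_dist (R : realType) (m : nat) (P : 'M[R]_m)
    (pi : 'rV[R]_m) : Prop :=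
  (forall s, 0 <= pi 0 s) /\ \sum_s pi 0 s = 1 /\ pi *m P = pi.

Definition feat (R : realType) (m n : nat) (Phi : 'M[R]_(m, n)) (s : 'I_m)
  : 'cV[R]_n := (row s Phi)^T.

Definition featsq (R : realType) (m n : nat) (Phi : 'M[R]_(m, n)) (s : 'I_m)
  : R := \sum_j (Phi s j) ^+ 2.

Definition hNMC (R : realType) (m n : nat) (pi : 'rV[R]_m)
    (Phi : 'M[R]_(m, n)) (V : 'cV[R]_m) (w : 'cV[R]_n) : 'cV[R]_n :=
  \sum_s (pi 0 s * (((feat Phi s)^T *m w) 0 0 - V s 0) / featsq Phi s)
           *: feat Phi s.

Definition Dmx (R : realType) (m : nat) (pi : 'rV[R]_m) : 'M[R]_m :=
  diag_mx pi.
Definition Nmx (R : realType) (m n : nat) (Phi : 'M[R]_(m, n)) : 'M[R]_m :=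
  diag_mx (\row_s (Num.sqrt (featsq Phi s))^-1).

Definition wM (R : realType) (m n : nat) (pi : 'rV[R]_m)
    (Phi : 'M[R]_(m, n)) (V : 'cV[R]_m) : 'cV[R]_n :=
  (invmx (Phi^T *m Nmx Phi *m Dmx pi *m Nmx Phi *m Phi)
     *m (Phi^T *m Nmx Phi *m Dmx pi *m Nmx Phi)) *m V.

Definition ode_solution (R : realType) (n : nat)
    (f : 'cV[R]_n -> 'cV[R]_n) (x : R -> 'cV[R]_n) : Prop :=
  forall t : R, is_derive t (1 : R) x (f (x t)).

Definition GAS_equilibrium (R : realType) (n : nat)
    (f : 'cV[R]_n -> 'cV[R]_n) (xs : 'cV[R]_n) : Prop :=
  f xs = 0 /\
  (forall eps : R, 0 < eps -> exists2 delta : R, 0 < delta &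
     forall x, ode_solution f x -> `|x 0 - xs| < delta ->
       forall t : R, 0 <= t -> `|x t - xs| < eps) /\
  (forall x, ode_solution f x -> x t @[t --> +oo] --> xs).

(* With A := Phi^T N D N Phi = Phi^T diag(pi_s / |phi_s|^2) Phi one has
   h(w) = A (w - w^M), so the limiting ODE is linear.  Ergodicity makes every
   pi_s positive and Phi has full column rank, so A is coercive:
   c |e|^2 <= e^T A e for some c > 0 (via a left inverse of Phi and
   Cauchy-Schwarz).  Hence A is invertible, w^M is the only equilibrium, and
   along every solution V := |w - w^M|^2 satisfies V' <= -2 c V, which gives
   both Lyapunov stability and global attraction. *)

From HB Require Import structures.
From mathcomp Require Import all_boot all_order all_algebra.
From mathcomp Require Import all_classical all_reals all_analysis.
From mathcomp Require Import ring lra.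
Import Order.TTheory GRing.Theory Num.Theory.
Import numFieldNormedType.Exports.
Set Implicit Arguments. Unset Strict Implicit. Unset Printing Implicit Defensive.
Local Open Scope ring_scope.
Local Open Scope classical_set_scope.

Lemma stationary_dist_gt0 (R : realType) (m : nat) (P : 'M[R]_m) (pi : 'rV[R]_m) :
  ergodic P -> stationary_dist P pi -> forall s, 0 < pi 0 s.
Proof.
move=> [k Pk_gt0] [pi_ge0 [pi_sum1 piP]] t.
have piPk : forall j, pi *m P ^+ j = pi.
  by elim=> [|j IHj]; rewrite ?expr0 ?mulmx1 // exprS mulmxA piP.
have [s0 pis0_gt0] : exists s0, 0 < pi 0 s0.
  apply/existsP; apply: contraT; rewrite negb_exists => /forallP pi_le0.
  suff: \sum_s pi 0 s = 0 by rewrite pi_sum1 => /eqP; rewrite oner_eq0.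
  by apply: big1 => s _; apply/eqP; rewrite eq_le pi_ge0 andbT leNgt pi_le0.
rewrite -(piPk k) mxE (bigD1 s0) //= ltr_pwDl ?mulr_gt0 //.
by rewrite sumr_ge0 // => s _; rewrite mulr_ge0 // ltW.
Qed.

Lemma sum_mul_sqr_le (R : realFieldType) (m : nat) (a b : 'I_m -> R) :
  (\sum_s a s * b s) ^+ 2 <= (\sum_s a s ^+ 2) * (\sum_s b s ^+ 2).
Proof.
have lagrange s t : 2 * (a s * b s * (a t * b t)) <=
    a s ^+ 2 * b t ^+ 2 + a t ^+ 2 * b s ^+ 2.
  rewrite -subr_ge0; have := sqr_ge0 (a s * b t - a t * b s).
  by congr (_ <= _); ring.
have prod_sum (F G : 'I_m -> R) :
    (\sum_s F s) * (\sum_t G t) = \sum_s \sum_t F s * G t.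
  by rewrite mulr_suml; apply: eq_bigr => s _; rewrite mulr_sumr.
rewrite -(@ler_pM2l _ 2) // expr2 prod_sum.
apply: (@le_trans _ _ (\sum_s \sum_t (a s ^+ 2 * b t ^+ 2 + a t ^+ 2 * b s ^+ 2))).
  rewrite mulr_sumr; apply: ler_sum => s _.
  by rewrite mulr_sumr; apply: ler_sum => t _.
rewrite (eq_bigr _ (fun s _ => big_split _ _ _ _ _)) big_split /=.
by rewrite -prod_sum exchange_big -prod_sum mulrC -mulr2n mulr_natl.
Qed.

Definition sqnorm (R : numDomainType) (n : nat) (e : 'cV[R]_n) : R :=
  \sum_i e i 0 ^+ 2.

Definition coercive (R : numDomainType) (n : nat) (A : 'M[R]_n) (c : R) :=
  forall e : 'cV[R]_n, c * sqnorm e <= (e^T *m A *m e) 0 0.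

Section SquaredNorm.
Variables (R : realFieldType) (n : nat).
Implicit Types (e : 'cV[R]_n).

Lemma sqnorm_ge0 e : 0 <= sqnorm e.
Proof. by rewrite sumr_ge0 // => i _; exact: sqr_ge0. Qed.

Lemma sqnorm_eq0 e : (sqnorm e == 0) = (e == 0).
Proof.
apply/idP/eqP => [/eqP e_sq0|->]; last first.
  by rewrite /sqnorm big1 // => i _; rewrite mxE expr0n.
apply/matrixP => i j; rewrite (ord1 j) mxE.
apply/eqP; rewrite -sqrf_eq0; apply/eqP.
exact: (psumr_eq0P (fun i _ => sqr_ge0 (e i 0)) e_sq0).
Qed.

Lemma sqnorm_mulmx_le (m : nat) (L : 'M[R]_(n, m)) (y : 'cV[R]_m) :
  sqnorm (L *m y) <= (\sum_i \sum_s L i s ^+ 2) * sqnorm y.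
Proof.
rewrite /sqnorm mulr_suml; apply: ler_sum => i _.
by rewrite mxE; exact: sum_mul_sqr_le.
Qed.

Lemma sqnorm_le_weighted (d : 'rV[R]_n) (y : 'cV[R]_n) :
  (forall s, 0 < d 0 s) ->
  sqnorm y <= (\sum_s (d 0 s)^-1) * \sum_s d 0 s * y s 0 ^+ 2.
Proof.
move=> d_gt0; rewrite mulr_sumr; apply: ler_sum => s _.
rewrite -{1}[y s 0 ^+ 2](mulKf (lt0r_neq0 (d_gt0 s))).
apply: ler_wpM2r; first by rewrite mulr_ge0 ?sqr_ge0 // ltW.
by rewrite (bigD1 s) //= lerDl sumr_ge0 // => t _; rewrite invr_ge0 ltW.
Qed.

(* On matrices [`|_|] is the largest absolute value of an entry. *)
Lemma sqnorm_lt_normr e (eps : R) :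
  0 < eps -> sqnorm e < eps ^+ 2 -> `|e| < eps.
Proof.
move=> eps_gt0 sq_lt; rewrite [`|e|]/Num.Def.normr /= mx_normrE.
apply: bigmax_lt => // -[i j] _ /=.
rewrite (ord1 j) -(@ltr_pXn2r _ 2) ?nnegrE ?(ltW eps_gt0) //.
rewrite real_normK ?num_real //; apply: le_lt_trans sq_lt.
by rewrite /sqnorm (bigD1 i) //= lerDl sumr_ge0 // => k _; exact: sqr_ge0.
Qed.

Lemma sqnorm_le_normr e :
  sqnorm e <= n%:R * `|e| ^+ 2.
Proof.
rewrite mulr_natl -[n in _ *+ n]card_ord -sumr_const; apply: ler_sum => i _.
rewrite -real_normK ?num_real // lerXn2r ?nnegrE //.
rewrite [leRHS]/Num.Def.normr /= mx_normrE.
exact: le_trans (le_bigmax _ _ (i, 0)).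
Qed.

End SquaredNorm.

Lemma quad_form_gram_diag (R : comPzRingType) (m n : nat) (M : 'M[R]_(m, n))
    (d : 'rV[R]_m) (e : 'cV[R]_n) :
  (e^T *m (M^T *m diag_mx d *m M) *m e) 0 0 = \sum_s d 0 s * (M *m e) s 0 ^+ 2.
Proof.
rewrite !mulmxA -trmx_mul -[_ *m M *m e]mulmxA mul_mx_diag mxE.
by apply: eq_bigr => s _; rewrite !mxE; ring.
Qed.

Lemma gram_diag_coercive (R : realFieldType) (m n : nat) (M : 'M[R]_(m, n))
    (d : 'rV[R]_m) :
  (forall s, 0 < d 0 s) -> row_full M ->
  exists2 c : R, 0 < c & coercive (M^T *m diag_mx d *m M) c.
Proof.
move=> d_gt0 /row_fullP [L LM1].
set K := \sum_i \sum_s L i s ^+ 2; set W := \sum_s (d 0 s)^-1.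
have K_ge0 : 0 <= K.
  by apply: sumr_ge0 => i _; apply: sumr_ge0 => s _; exact: sqr_ge0.
have W_ge0 : 0 <= W by rewrite sumr_ge0 // => s _; rewrite invr_ge0 ltW.
(* the summand 1 avoids [0^-1 = 0] when [K * W = 0] *)
exists (K * W + 1)^-1; first by rewrite invr_gt0 ltr_wpDl ?mulr_ge0.
move=> e; rewrite quad_form_gram_diag mulrC ler_pdivrMr ?ltr_wpDl ?mulr_ge0 //.
rewrite {1}(_ : e = L *m (M *m e)); last by rewrite mulmxA LM1 mul1mx.
apply: le_trans (sqnorm_mulmx_le L (M *m e)) _.
apply: le_trans (ler_wpM2l K_ge0 (sqnorm_le_weighted (M *m e) d_gt0)) _.
rewrite -/W; set Q := \sum_s _; have Q_ge0 : 0 <= Q.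
  by apply: sumr_ge0 => s _; rewrite mulr_ge0 ?sqr_ge0 // ltW.
by rewrite mulrA mulrC mulrDr mulr1 lerDl.
Qed.

Lemma coercive_unitmx (R : realFieldType) (n : nat) (A : 'M[R]_n) (c : R) :
  0 < c -> coercive A c -> A \in unitmx.
Proof.
move=> c_gt0 A_coer; rewrite -row_free_unit; apply: inj_row_free => v vA0.
have := A_coer v^T; rewrite trmxK vA0 mul0mx mxE.
rewrite pmulr_rle0 // => sq_le0.
have /eqP : sqnorm v^T = 0 by apply/eqP; rewrite eq_le sq_le0 sqnorm_ge0.
by rewrite sqnorm_eq0 -trmx0 => /eqP /trmx_inj.
Qed.

Lemma linear_equilibrium_unique (R : fieldType) (n : nat) (A : 'M[R]_n)
    (xs w : 'cV[R]_n) :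
  A \in unitmx -> - (A *m (w - xs)) = 0 -> w = xs.
Proof.
move=> A_unit /eqP; rewrite oppr_eq0 => /eqP Aw0; apply/eqP.
by rewrite -subr_eq0 -(mulKmx A_unit (w - xs)) Aw0 mulmx0.
Qed.

Lemma is_derive_mx_entry (R : realFieldType) (m n : nat) (x : R -> 'M[R]_(m, n))
    (t : R) (dx : 'M[R]_(m, n)) i j :
  is_derive t 1 x dx -> is_derive t 1 (fun s => x s i j) (dx i j).
Proof.
move=> [x_der <-]; have := (derivable_mxP x t 1).1 x_der i j.
by move=> xij_der; apply: DeriveDef => //; rewrite derive_mx // mxE.
Qed.

Lemma is_derive_sqnorm (R : realFieldType) (n : nat) (x : R -> 'cV[R]_n)
    (t : R) (dx : 'cV[R]_n) (xs : 'cV[R]_n) :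
  is_derive t 1 x dx ->
  is_derive t 1 (fun s => sqnorm (x s - xs)) (2 * ((x t - xs)^T *m dx) 0 0).
Proof.
move=> x_der.
have e_der i : is_derive t 1 (fun s => (x s - xs) i 0 ^+ 2)
    (2 * (x t - xs) i 0 * dx i 0).
  have xi_der := is_deriveB (is_derive_mx_entry i 0 x_der)
    (is_derive_cst (xs i 0) t 1).
  have := is_deriveX 2 xi_der.
  rewrite (_ : (_ - _) ^+ 2 = (fun s => (x s - xs) i 0 ^+ 2)).
    by move=> ?; apply: is_derive_eq; rewrite !mxE /GRing.scale /= subr0 expr1.
  by apply/funext => s; rewrite /= !mxE.
have := is_derive_sum e_der; rewrite (_ : \sum_i _ = fun s => sqnorm (x s - xs)).
  move=> ?; apply: is_derive_eq; rewrite mxE mulr_sumr.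
  by apply: eq_bigr => i _; rewrite !mxE mulrA.
by apply/funext => s; rewrite fct_sumE.
Qed.

Lemma ler0_is_derive_nincr (R : realType) (g dg : R -> R) :
  (forall t : R, is_derive t 1 g (dg t)) -> (forall t, 0 < t -> dg t <= 0) ->
  forall t, 0 <= t -> g t <= g 0.
Proof.
move=> g_der dg_le0 t t_ge0.
have g_cont : continuous g.
  move=> s; apply: differentiable_continuous; apply/derivable1_diffP.
  by case: (g_der s).
apply: (@ler0_derive1_nincry R g 0) => //.
- move=> s; rewrite in_itv /= andbT => s_gt0.
  by rewrite derive1E (@derive_val _ _ _ _ _ _ _ (g_der s)) dg_le0.
- exact: continuous_subspaceT.
Qed.

Section CoerciveLinearFlow.
Variables (R : realType) (n : nat) (A : 'M[R]_n) (xs : 'cV[R]_n) (c : R).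
Hypotheses (c_gt0 : 0 < c) (A_coercive : coercive A c).

Local Notation flow := (fun w : 'cV[R]_n => - (A *m (w - xs))).

(* [V' <= -2 c V] for [V := sqnorm (x - xs)], so [V (1 + 2 c t)] is
   nonincreasing: a polynomial substitute for exponential decay. *)
Lemma sqnorm_flow_decay (x : R -> 'cV[R]_n) : ode_solution flow x ->
  forall t, 0 <= t -> sqnorm (x t - xs) * (1 + 2 * c * t) <= sqnorm (x 0 - xs).
Proof.
move=> x_sol; pose V s := sqnorm (x s - xs).
pose q s := ((x s - xs)^T *m A *m (x s - xs)) 0 0.
have V_der (t : R) : is_derive t 1 V (- (2 * q t)).
  apply: is_derive_eq (is_derive_sqnorm xs (x_sol t)) _.
  by rewrite mulmxN mulmxA mxE mulrN.
have lin_der (t : R) : is_derive t 1 (fun s : R => 1 + 2 * c * s) (2 * c).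
  rewrite (_ : (fun s => _) = cst 1 + (2 * c) \*: id) //.
  apply: is_derive_eq (is_deriveD (is_derive_cst (1 : R) t 1)
    (is_deriveZ (2 * c) (is_derive_id t (1 : R)))) _.
  by rewrite add0r /GRing.scale /= mulr1.
have g_der (t : R) : is_derive t 1 (fun s => V s * (1 + 2 * c * s))
    (V t * (2 * c) + (1 + 2 * c * t) * - (2 * q t)).
  exact: is_deriveM (V_der t) (lin_der t).
move=> t t_ge0; apply: le_trans (ler0_is_derive_nincr g_der _ t_ge0) _; last first.
  by rewrite mulr0 addr0 mulr1.
move=> {t_ge0}t t_gt0.
have := A_coercive (x t - xs); rewrite -/(V t) -/(q t) => cV_le_q.
have V_ge0 := sqnorm_ge0 (x t - xs); rewrite -/(V t) in V_ge0.
have ct_ge0 : 0 <= c * t by rewrite mulr_ge0 // ltW.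
have : 0 <= c * c * t * V t by rewrite !mulr_ge0 // ltW.
nra.
Qed.

Lemma sqnorm_flow_le (x : R -> 'cV[R]_n) : ode_solution flow x ->
  forall t, 0 <= t -> sqnorm (x t - xs) <= sqnorm (x 0 - xs).
Proof.
move=> x_sol t t_ge0; apply: le_trans (sqnorm_flow_decay x_sol t_ge0).
by rewrite ler_peMr ?sqnorm_ge0 // lerDl !mulr_ge0 // ltW.
Qed.

Lemma coercive_flow_stable (eps : R) : 0 < eps ->
  exists2 delta : R, 0 < delta & forall x, ode_solution flow x ->
    `|x 0 - xs| < delta -> forall t, 0 <= t -> `|x t - xs| < eps.
Proof.
move=> eps_gt0; set N : R := n%:R; have N_ge0 : 0 <= N by [].
have N1_gt0 : 0 < N + 1 by rewrite ltr_wpDl.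
exists (eps / (N + 1)) => [|x x_sol x0_lt t t_ge0]; first by rewrite divr_gt0.
apply: sqnorm_lt_normr => //; apply: le_lt_trans (sqnorm_flow_le x_sol t_ge0) _.
apply: le_lt_trans (sqnorm_le_normr _) _; rewrite -/N.
have {}x0_lt : `|x 0 - xs| ^+ 2 < (eps / (N + 1)) ^+ 2.
  by rewrite ltrXn2r // ltW.
set d := eps / (N + 1) in x0_lt; have d_gt0 : 0 < d by rewrite divr_gt0.
have -> : eps = (N + 1) * d by rewrite /d mulrC divfK ?lt0r_neq0.
nra.
Qed.

Lemma coercive_flow_attractive (x : R -> 'cV[R]_n) : ode_solution flow x ->
  x t @[t --> +oo] --> xs.
Proof.
move=> x_sol; apply/cvgrPdist_lt => eps eps_gt0.
have ce_gt0 : 0 < 2 * c * eps ^+ 2 by rewrite !mulr_gt0 // exprn_gt0.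
near=> t.
have t_gt0 : 0 < t by near: t; apply: nbhs_pinfty_gt; rewrite num_real.
have t_big : sqnorm (x 0 - xs) < 2 * c * eps ^+ 2 * t.
  by rewrite -ltr_pdivrMl //; near: t; apply: nbhs_pinfty_gt; rewrite num_real.
rewrite distrC; apply: sqnorm_lt_normr => //.
have ct1_gt0 : 0 < 1 + 2 * c * t by rewrite ltr_wpDr // !mulr_ge0 // ltW.
rewrite -(ltr_pM2r ct1_gt0).
apply: le_lt_trans (sqnorm_flow_decay x_sol (ltW t_gt0)) _.
apply: lt_le_trans t_big _.
have -> : eps ^+ 2 * (1 + 2 * c * t) = eps ^+ 2 + 2 * c * eps ^+ 2 * t by ring.
by rewrite ler_wpDl ?sqr_ge0.
Unshelve. all: end_near.
Qed.

Lemma coercive_flow_GAS : GAS_equilibrium flow xs.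
Proof.
split; first by rewrite subrr mulmx0 oppr0.
split; [exact: coercive_flow_stable | exact: coercive_flow_attractive].
Qed.

End CoerciveLinearFlow.

Section NormalizedMonteCarlo.
Variables (R : realType) (m n : nat) (pi : 'rV[R]_m) (Phi : 'M[R]_(m, n)).

Lemma featsq_ge0 s : 0 <= featsq Phi s.
Proof. by rewrite sumr_ge0 // => j _; exact: sqr_ge0. Qed.

Lemma featsq_gt0 s : feat Phi s != 0 -> 0 < featsq Phi s.
Proof.
move=> feat_neq0; rewrite lt_def featsq_ge0 andbT.
apply: contra feat_neq0 => /eqP feat_sq0; apply/eqP/matrixP => j i.
rewrite (ord1 i) !mxE; apply/eqP; rewrite -sqrf_eq0; apply/eqP.
exact: (psumr_eq0P (fun j _ => sqr_ge0 (Phi s j)) feat_sq0).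
Qed.

Lemma mulmx_NDN_diag :
  Phi^T *m Nmx Phi *m Dmx pi *m Nmx Phi =
  Phi^T *m diag_mx (\row_s (pi 0 s / featsq Phi s)).
Proof.
rewrite -!mulmxA /Nmx /Dmx !mulmx_diag; congr (_ *m diag_mx _).
apply/rowP => s; rewrite !mxE.
have sqrtV_sqr : (Num.sqrt (featsq Phi s))^-1 ^+ 2 = (featsq Phi s)^-1.
  by rewrite exprVn sqr_sqrtr ?featsq_ge0.
by rewrite -sqrtV_sqr; ring.
Qed.

Lemma hNMCE (V : 'cV[R]_m) (w : 'cV[R]_n) :
  hNMC pi Phi V w = Phi^T *m Nmx Phi *m Dmx pi *m Nmx Phi *m (Phi *m w - V).
Proof.
rewrite mulmx_NDN_diag mul_mx_diag /hNMC.
apply/matrixP => j i; rewrite (ord1 i) summxE !mxE; apply: eq_bigr => s _.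
rewrite !mxE; under eq_bigr do rewrite /feat trmxK mxE.
by ring.
Qed.

Lemma hNMC_wM (V : 'cV[R]_m) (w : 'cV[R]_n) :
  Phi^T *m Nmx Phi *m Dmx pi *m Nmx Phi *m Phi \in unitmx ->
  hNMC pi Phi V w =
  Phi^T *m Nmx Phi *m Dmx pi *m Nmx Phi *m Phi *m (w - wM pi Phi V).
Proof.
by move=> A_unit; rewrite hNMCE /wM !mulmxBr !mulmxA mulmxV // mul1mx.
Qed.

End NormalizedMonteCarlo.

Theorem proposition5 (R : realType) (m n : nat)
    (P : 'M[R]_m) (pi : 'rV[R]_m) (Phi : 'M[R]_(m, n)) (V : 'cV[R]_m) :
  stochastic P -> ergodic P -> stationary_dist P pi ->
  (forall s, feat Phi s != 0) ->
  \rank Phi = n ->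
  GAS_equilibrium (fun w => - hNMC pi Phi V w) (wM pi Phi V) /\
  (forall w', GAS_equilibrium (fun w => - hNMC pi Phi V w) w' ->
     w' = wM pi Phi V).
Proof.
move=> _ P_ergodic pi_stationary feat_neq0 Phi_rank.
have pi_gt0 := stationary_dist_gt0 P_ergodic pi_stationary.
set A := Phi^T *m Nmx Phi *m Dmx pi *m Nmx Phi *m Phi.
have [c c_gt0 A_coercive] : exists2 c : R, 0 < c & coercive A c.
  rewrite /A mulmx_NDN_diag; apply: gram_diag_coercive.
    by move=> s; rewrite mxE divr_gt0 ?featsq_gt0.
  by rewrite /row_full Phi_rank.
have A_unit := coercive_unitmx c_gt0 A_coercive.
have -> : (fun w => - hNMC pi Phi V w) = (fun w => - (A *m (w - wM pi Phi V))).
  by apply/funext => w; rewrite hNMC_wM.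
split; first exact: coercive_flow_GAS c_gt0 A_coercive.
by move=> w' [/(linear_equilibrium_unique A_unit) -> _].
Qed.
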